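(* Let $n\ge2$, $h=0$, $\epsilon\in[-1,1]$. For any two distinct stable states $s_1,s_2\in\mathcal X_s$, $$\Gamma_s:=\Phi(s_1,s_2)-H(s_1)=\begin{cases}\frac{n^2}{2}+|\epsilon|n & n\text{ even},\\ \frac{n^2-1}{2}+|\epsilon|(n+1) & n\text{ odd}.\end{cases}$$
   Context: Setup. The graph $\mathcal G(2,n)$ has vertex set $V=V^{(1)}\cup V^{(2)}$ with $V^{(1)}=\{1,\dots,n\}$, $V^{(2)}=\{n+1,\dots,2n\}$; its edge set is $E=E_{\mathrm{int}}\cup E_{\mathrm{cross}}$, where $E_{\mathrm{int}}$ consists of all pairs of distinct vertices in the same $V^{(k)}$ and $E_{\mathrm{cross}}=\{\{i,i+n\}:1\le i\le n\}$. The configuration space is $\mathcal X=\{-1,+1\}^V$ and $H(\sigma)=-\sum_{\{i,j\}\in E_{\mathrm{int}}}\sigma_i\sigma_j-\epsilon\sum_{\{i,j\}\in E_{\mathrm{cross}}}\sigma_i\sigma_j-h\sum_{i\in V}\sigma_i$. The stable states $\mathcal X_s$ are the global minimizers of $H$. Two configurations are neighbours if they differ at exactly one vertex; a path is a finite sequence of configurations with consecutive ones neighbours; $\Phi(\eta,\eta')=\min_{\omega:\eta\to\eta'}\max_{\zeta\in\omega}H(\zeta)$, the minimum over paths from $\eta$ to $\eta'$. *)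

From HB Require Import structures.
From mathcomp Require Import all_boot all_order all_algebra.
Set Implicit Arguments. Unset Strict Implicit. Unset Printing Implicit Defensive.
Import Order.TTheory GRing.Theory Num.Theory.
Local Open Scope ring_scope.

(* Vertices of G(2,n): 'I_(n+n); vertex v (0-based) lies in V^(1) iff v < n.
   Paper vertex i (1..n) is index i-1, paper vertex i+n is index n+i-1. *)
Definition vertex (n : nat) := 'I_(n + n).

(* Configurations: true = +1, false = -1. *)
Definition config (n : nat) := {ffun vertex n -> bool}.

Definition spin (R : ringType) (b : bool) : R := if b then 1 else -1.

Definition same_block (n : nat) (i j : vertex n) : bool := (i < n)%N == (j < n)%N.

(* H(sigma) = - sum_{E_int} s_i s_j - eps sum_{E_cross} s_i s_j - h sum_i s_i.
   Each unordered internal edge {i,j} is counted once via i < j. *)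
Definition Ham (R : ringType) (n : nat) (eps h : R) (s : config n) : R :=
  - (\sum_(i : vertex n) \sum_(j : vertex n | ((i < j)%N && same_block i j))
        spin R (s i) * spin R (s j))
  - eps * (\sum_(i < n) spin R (s (lshift n i)) * spin R (s (rshift n i)))
  - h * (\sum_(i : vertex n) spin R (s i)).

Definition stable (R : realDomainType) (n : nat) (eps h : R) (s : config n) : Prop :=
  forall t : config n, Ham eps h s <= Ham eps h t.

Definition neighb (n : nat) (s t : config n) : bool :=
  #|[set v : vertex n | s v != t v]| == 1%N.

Definition is_path (n : nat) (eta eta' : config n) (p : seq (config n)) : bool :=
  path (@neighb n) eta p && (last eta p == eta').

Definition path_max (R : realDomainType) (n : nat) (eps h : R)
    (eta : config n) (p : seq (config n)) : R :=
  foldr Num.max (Ham eps h eta) (map (Ham eps h) p).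

Definition is_Phi (R : realDomainType) (n : nat) (eps h : R)
    (eta eta' : config n) (v : R) : Prop :=
  (exists p, is_path eta eta' p /\ path_max eps h eta p = v) /\
  (forall p, is_path eta eta' p -> v <= path_max eps h eta p).

From HB Require Import structures.
From mathcomp Require Import all_boot all_order all_algebra.
From mathcomp Require Import ring lra zify.
Import Order.TTheory GRing.Theory Num.Theory.
Local Open Scope ring_scope.

Set Implicit Arguments. Unset Strict Implicit. Unset Printing Implicit Defensive.

(* Write a configuration as its two blocks a, b (the spins on V^(1) and
   V^(2)), with magnetizations m(a), m(b) and overlap c(a,b) = sum_i a_i b_i.
   Completing the square in each complete graph gives
       H = n - (m(a)^2 + m(b)^2) / 2 - eps * c(a,b),
   so H >= H_min := n - n^2 - |eps| n, with equality exactly for block-constant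
   configurations whose blocks are aligned according to the sign of eps; these
   are the stable states.  Two distinct stable states differ on a whole block.
   Lower bound: along any path the number of up spins in that block moves by
   at most one per step, so it crosses n/2: for n even some configuration has
   a balanced block (m = 0), for n odd two neighbours have m = 1 and m = -1;
   the estimates c <= n - |m(a) - m(b)| and -c <= n - |m(a) + m(b)| then
   give an energy at least H_min + Gamma.
   Upper bound: flipping the 2n vertices one at a time in order, every
   intermediate configuration keeps one block constant, which forces
   H <= H_min + Gamma by the parity of the other magnetization. *)

(* Splitting a symmetric double sum into twice its strict upper triangle plus
   the diagonal; it turns the sum over internal edges into squared sums. *)
Lemma sum_pairs_sym (V : nmodType) (m : nat) (f : 'I_m -> 'I_m -> V) :
  (forall i j, f i j = f j i) ->
  \sum_(i < m) \sum_(j < m) f i j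
    = (\sum_(i < m) \sum_(j < m | (i < j)%N) f i j) *+ 2 + \sum_(i < m) f i i.
Proof.
move=> fC.
have split_row (i : 'I_m) : \sum_(j < m) f i j =
    \sum_(j < m | (i < j)%N) f i j + \sum_(j < m | (j < i)%N) f i j + f i i.
  rewrite (bigID (fun j : 'I_m => (i < j)%N)) /= -addrA; congr (_ + _).
  rewrite (bigID (fun j : 'I_m => (j < i)%N)) /=; congr (_ + _).
    by apply: eq_bigl => j; case: ltngtP.
  rewrite (big_pred1 i) // => j /=; rewrite -!leqNgt eq_sym -eqn_leq.
  by apply/idP/idP => [/eqP/val_inj->|/eqP->].
have lower_upper : \sum_(i < m) \sum_(j < m | (j < i)%N) f i j
                 = \sum_(i < m) \sum_(j < m | (i < j)%N) f i j.
  rewrite (exchange_big_dep xpredT) //=; apply: eq_bigr => i _.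
  by apply: eq_bigr => j _; rewrite fC.
by rewrite (eq_bigr _ (fun i _ => split_row i)) !big_split /= lower_upper mulr2n.
Qed.

Lemma path_cross (T : eqType) (e : rel T) (P : pred T) (x0 : T) (p : seq T) :
  path e x0 p -> P x0 -> ~~ P (last x0 p) ->
  exists x y, [/\ x \in x0 :: p, y \in x0 :: p, e x y, P x & ~~ P y].
Proof.
elim: p x0 => [|y p IH] x0 /=; first by move=> _ ->.
case/andP=> exy yp Px0 Plast; case Py: (P y).
  have [x' [y' [x'p y'p ex'y' Px' Py']]] := IH y yp Py Plast.
  by exists x', y'; split => //; rewrite inE ?x'p ?y'p orbT.
by exists x0, y; split; rewrite ?inE ?eqxx ?Py ?orbT.
Qed.

Lemma path_crosses_level (T : eqType) (e : rel T) (f : T -> nat) (k : nat)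
    (x0 : T) (p : seq T) :
  symmetric e -> (forall x y, e x y -> (f y <= (f x).+1)%N) -> path e x0 p ->
  (k < f x0)%N != (k < f (last x0 p))%N ->
  exists x y, [/\ x \in x0 :: p, y \in x0 :: p, e x y, f x = k.+1 & f y = k].
Proof.
move=> eC step ep; case: (ltnP k (f x0)) => fx0 /= flast.
  have [x [y [xp yp exy fx fy]]] := path_cross ep (P := fun z => k < f z)%N fx0 flast.
  exists x, y; have := step y x; rewrite eC => /(_ exy).
  by move: fx fy => /=; split => //; lia.
have [x [y [xp yp exy fx fy]]] :
    exists x y, [/\ x \in x0 :: p, y \in x0 :: p, e x y, ~~ (k < f x)%N & ~~ ~~ (k < f y)%N].
  by apply: path_cross => //; rewrite -leqNgt.
exists y, x; have := step x y exy.
by move: fx fy => /=; rewrite negbK; split => //; [rewrite eC | lia | lia].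
Qed.

Lemma path_of_steps (T : eqType) (e : rel T) (G : pred T) (g : nat -> T) (m : nat) :
  (forall k, (k < m)%N -> g k.+1 = g k \/ e (g k) (g k.+1)) ->
  (forall k, (k <= m)%N -> G (g k)) ->
  exists p, [/\ path e (g 0%N) p, last (g 0%N) p = g m & all G p].
Proof.
elim: m => [|m IH] step G_g; first by exists [::].
have [p [ep lastp Gp]] := IH (fun k km => step k (ltnW km)) (fun k km => G_g k (leqW km)).
case: (step m (ltnSn m)) => [same | emm]; first by exists p; rewrite same.
exists (rcons p (g m.+1)).
by rewrite rcons_path ep lastp emm last_rcons all_rcons G_g.
Qed.

Lemma spinK (R : nzRingType) (b : bool) : spin R b * spin R b = 1.
Proof. by case: b; rewrite /spin ?mulr1 ?mulrNN ?mulr1. Qed.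

Lemma spinN (R : nzRingType) (b : bool) : spin R (~~ b) = - spin R b.
Proof. by case: b; rewrite /spin ?opprK. Qed.

Lemma spin_nat (R : nzRingType) (b : bool) : spin R b = 2 * (b : nat)%:R - 1.
Proof. by case: b; rewrite /spin /= ?mulr0 ?sub0r // mulr1 addrK. Qed.

Lemma norm_spin (R : numDomainType) (b : bool) : `|spin R b| = 1.
Proof. by case: b; rewrite /spin ?normrN normr1. Qed.

Section Blocks.
Variables (R : realFieldType) (n : nat).

Definition blockA (s : config n) (i : 'I_n) : bool := s (lshift n i).
Definition blockB (s : config n) (i : 'I_n) : bool := s (rshift n i).

Definition mag (a : 'I_n -> bool) : R := \sum_i spin R (a i).
Definition overlap (a b : 'I_n -> bool) : R := \sum_i spin R (a i) * spin R (b i).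
Definition blockH (eps : R) (a b : 'I_n -> bool) : R :=
  n%:R - (mag a ^+ 2 + mag b ^+ 2) / 2 - eps * overlap a b.

Lemma sum_intra_block (s : config n) :
  \sum_(i : vertex n) \sum_(j : vertex n)
     (if same_block i j then spin R (s i) * spin R (s j) else 0)
  = mag (blockA s) ^+ 2 + mag (blockB s) ^+ 2.
Proof.
have sqr_sum (F : 'I_n -> R) : (\sum_i F i) ^+ 2 = \sum_i \sum_j F i * F j.
  by rewrite expr2 mulr_suml; apply: eq_bigr => i _; rewrite mulr_sumr.
rewrite big_split_ord !sqr_sum /=; congr (_ + _); apply: eq_bigr => i _;
  rewrite big_split_ord /= /same_block /=.
  rewrite [X in _ + X]big1 ?addr0 => [|j _]; last by rewrite ltn_ord ltnNge leq_addr.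
  by apply: eq_bigr => j _; rewrite !ltn_ord.
rewrite [X in X + _]big1 ?add0r => [|j _]; last by rewrite ltn_ord ltnNge leq_addr.
by apply: eq_bigr => j _; rewrite !ltnNge !leq_addr.
Qed.

Lemma Ham_blocks (eps : R) (s : config n) :
  Ham eps 0 s = blockH eps (blockA s) (blockB s).
Proof.
pose f (i j : vertex n) : R :=
  if same_block i j then spin R (s i) * spin R (s j) else 0.
have fC i j : f i j = f j i by rewrite /f /same_block eq_sym mulrC.
have fii i : f i i = 1 by rewrite /f /same_block eqxx spinK.
have intra : \sum_(i : vertex n) \sum_(j : vertex n | (i < j)%N && same_block i j)
               spin R (s i) * spin R (s j)
             = \sum_(i : vertex n) \sum_(j : vertex n | (i < j)%N) f i j.
  by apply: eq_bigr => i _; rewrite big_mkcondr.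
have := sum_pairs_sym fC; rewrite sum_intra_block (eq_bigr _ (fun i _ => fii i)).
rewrite sumr_const card_ord natrD -intra mulr2n => pairs.
rewrite /Ham /blockH mul0r subr0 pairs.
by rewrite /overlap /blockA /blockB; field.
Qed.

Lemma overlapC (a b : 'I_n -> bool) : overlap a b = overlap b a.
Proof. by apply: eq_bigr => i _; rewrite mulrC. Qed.

Lemma blockHC (eps : R) (a b : 'I_n -> bool) : blockH eps a b = blockH eps b a.
Proof. by rewrite /blockH overlapC [mag a ^+ 2 + _]addrC. Qed.

Lemma blockH_eq1 (eps : R) (a a' b b' : 'I_n -> bool) :
  a =1 a' -> b =1 b' -> blockH eps a b = blockH eps a' b'.
Proof.
move=> aE bE; rewrite /blockH /mag /overlap.
by congr (_ - (_ ^+ 2 + _ ^+ 2) / 2 - eps * _); apply: eq_bigr => i _; rewrite ?aE ?bE.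
Qed.

Definition ups (a : 'I_n -> bool) : nat := (\sum_i (a i : nat))%N.

Lemma mag_ups (a : 'I_n -> bool) : mag a = 2 * (ups a)%:R - n%:R.
Proof.
rewrite /mag /ups (eq_bigr _ (fun i _ => spin_nat R (a i))).
by rewrite sumrB natr_sum mulr_sumr sumr_const card_ord.
Qed.

(* Magnetization and parity: m(a) = n mod 2, so for n odd |m(a)| >= 1 and for
   n even m(a) = 0 or |m(a)| >= 2. *)
Lemma mag_parity (a : 'I_n -> bool) :
  if odd n then is_true (1 <= `|mag a|) else mag a = 0 \/ 2 <= `|mag a|.
Proof.
have nE : (n%:R : R) = 2 * (n./2)%:R + (odd n)%:R.
  by rewrite -{1}(odd_double_half n) natrD -muln2 natrM mulrC addrC.
rewrite mag_ups nE; move: (ups a) (n./2) => k q.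
case: (odd n) => /=.
  rewrite ler_normr; apply/orP; case: (leqP k q) => kq.
    have : (k%:R : R) <= q%:R by rewrite ler_nat.
    by right; lra.
  have : (q%:R + 1 : R) <= k%:R by rewrite natr1 ler_nat.
  by left; lra.
case: (ltngtP k q) => kq; last by left; rewrite kq; ring.
- have : (k%:R + 1 : R) <= q%:R by rewrite natr1 ler_nat.
  by right; rewrite ler_normr; apply/orP; right; lra.
- have : (q%:R + 1 : R) <= k%:R by rewrite natr1 ler_nat.
  by right; rewrite ler_normr; apply/orP; left; lra.
Qed.

Lemma ups_const (a : 'I_n -> bool) (beta : bool) :
  (forall i, a i = beta) -> ups a = (beta * n)%N.
Proof.
move=> aE; rewrite /ups (eq_bigr (fun _ => nat_of_bool beta)) => [|i _]; last by rewrite aE.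
by rewrite sum_nat_const card_ord mulnC.
Qed.

Lemma mag_const (a : 'I_n -> bool) (beta : bool) :
  (forall i, a i = beta) -> mag a = spin R beta * n%:R.
Proof.
move=> aE; rewrite /mag (eq_bigr (fun _ => spin R beta)) => [|i _]; last by rewrite aE.
by rewrite sumr_const card_ord mulr_natr.
Qed.

Lemma overlap_const (a b : 'I_n -> bool) (beta : bool) :
  (forall i, b i = beta) -> overlap a b = spin R beta * mag a.
Proof. by move=> bE; rewrite /overlap /mag mulr_sumr; apply: eq_bigr => i _; rewrite bE mulrC. Qed.

Lemma norm_mag_le (a : 'I_n -> bool) : `|mag a| <= n%:R.
Proof.
apply: le_trans (ler_norm_sum _ _ _) _.
by rewrite (eq_bigr (fun _ => 1)) ?sumr_const ?card_ord // => i _; rewrite norm_spin.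
Qed.

Lemma sqr_mag_le (a : 'I_n -> bool) : mag a ^+ 2 <= n%:R ^+ 2.
Proof.
by rewrite -real_normK ?num_real // ler_sqr ?nnegrE // (le_trans _ (norm_mag_le a)).
Qed.

Lemma mag_extreme (a : 'I_n -> bool) (beta : bool) :
  mag a = spin R beta * n%:R -> forall i, a i = beta.
Proof.
move=> magE i.
have : \sum_j (1 - spin R beta * spin R (a j)) == 0.
  by rewrite sumrB sumr_const card_ord -mulr_sumr -/(mag a) magE mulrA spinK mul1r subrr.
rewrite psumr_eq0 => [|j _]; last by case: (beta); case: (a j); rewrite /spin; lra.
move/allP/(_ i (mem_index_enum _)) => /=.
by case: (beta); case: (a i) => //; rewrite /spin; lra.
Qed.

Lemma sqr_mag_max (a : 'I_n -> bool) :
  mag a ^+ 2 = n%:R ^+ 2 -> exists beta, forall i, a i = beta.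
Proof.
move/eqP; rewrite eqf_sqr => /orP[|] /eqP magE.
  by exists true; apply: mag_extreme; rewrite magE /spin mul1r.
by exists false; apply: mag_extreme; rewrite magE /spin mulN1r.
Qed.

Lemma sum_ones : n%:R = \sum_(i < n) (1 : R).
Proof. by rewrite sumr_const card_ord. Qed.

(* Each site where a and b disagree lowers the overlap by two, and there are
   at least |m(a) - m(b)| / 2 of them; dually with agreeing sites. *)
Lemma overlap_le (a b : 'I_n -> bool) : overlap a b <= n%:R - `|mag a - mag b|.
Proof.
rewrite lerBrDr addrC -lerBrDr /mag -sumrB.
apply: le_trans (ler_norm_sum _ _ _) _.
rewrite /overlap sum_ones -sumrB; apply: ler_sum => i _.
by case: (a i); case: (b i); rewrite /spin /= ler_norml; lra.
Qed.

Lemma overlap_ge (a b : 'I_n -> bool) : - overlap a b <= n%:R - `|mag a + mag b|.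
Proof.
rewrite lerBrDr addrC -lerBrDr opprK /mag -big_split /=.
apply: le_trans (ler_norm_sum _ _ _) _.
rewrite /overlap sum_ones -big_split; apply: ler_sum => i _.
by case: (a i); case: (b i); rewrite /spin /= ler_norml; lra.
Qed.

Lemma cross_energy_le (eps : R) (a b : 'I_n -> bool) :
  eps * overlap a b <= `|eps| * n%:R.
Proof.
apply: le_trans (ler_norm _) _; rewrite normrM ler_wpM2l //.
have := overlap_le a b; have := overlap_ge a b.
have := normr_ge0 (mag a - mag b); have := normr_ge0 (mag a + mag b).
rewrite ler_norml; lra.
Qed.

Definition flipped (a a' : 'I_n -> bool) : Prop :=
  exists i, a' i = ~~ a i /\ forall j, j != i -> a' j = a j.

Lemma ups_flipped (a a' : 'I_n -> bool) : flipped a a' -> (ups a' <= (ups a).+1)%N.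
Proof.
case=> i [flip_i same]; rewrite /ups (bigD1 i) //= [X in (_ <= X.+1)%N](bigD1 i) //=.
rewrite (eq_bigr (fun j => (a j : nat))) => [|j /same -> //].
by rewrite flip_i; case: (a i) => /=; lia.
Qed.

Lemma overlap_flipped (a a' b : 'I_n -> bool) :
  flipped a a' -> `|overlap a b - overlap a' b| = 2.
Proof.
case=> i [flip_i same]; rewrite /overlap (bigD1 i) //= [X in _ - X](bigD1 i) //=.
rewrite [X in _ - (_ + X)](eq_bigr (fun j => spin R (a j) * spin R (b j))) => [|j /same -> //].
rewrite opprD addrACA subrr addr0 flip_i.
by rewrite spinN mulNr opprK -mulr2n normrMn normrM !norm_spin mulr1.
Qed.
End Blocks.

Section GroundStates.
Variables (R : realFieldType) (n : nat) (eps : R).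

Definition ground_energy : R := n%:R - n%:R ^+ 2 - `|eps| * n%:R.

Lemma ground_energy_le (a b : 'I_n -> bool) : ground_energy <= blockH eps a b.
Proof.
have := sqr_mag_le R a; have := sqr_mag_le R b; have := cross_energy_le eps a b.
rewrite /ground_energy /blockH; lra.
Qed.

Lemma ground_energy_blocks (a b : 'I_n -> bool) : blockH eps a b = ground_energy ->
  (exists alpha, forall i, a i = alpha) /\ (exists beta, forall i, b i = beta).
Proof.
have := sqr_mag_le R a; have := sqr_mag_le R b; have := cross_energy_le eps a b.
rewrite /ground_energy /blockH => ? ? ? ?; split; apply: sqr_mag_max; lra.
Qed.

(* The bound is attained: both blocks up if eps >= 0, opposite otherwise. *)
Lemma ground_energy_attained : exists t : config n, Ham eps 0 t = ground_energy.
Proof.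
pose t : config n := [ffun v : vertex n => if (val v < n)%N then true else 0 <= eps].
have tA i : blockA t i = true by rewrite /blockA ffunE /= ltn_ord.
have tB i : blockB t i = (0 <= eps) by rewrite /blockB ffunE /= ltnNge leq_addr.
exists t; rewrite Ham_blocks /blockH (overlap_const R _ tB) (mag_const R tA) (mag_const R tB).
rewrite !exprMn !expr2 !spinK /ground_energy /spin /=.
by case: ger0P => _ /=; field.
Qed.

Lemma stable_ground (s : config n) : stable eps 0 s -> Ham eps 0 s = ground_energy.
Proof.
move=> st; have [t tE] := ground_energy_attained.
by apply/eqP; rewrite eq_le -{1}tE st Ham_blocks ground_energy_le.
Qed.

Lemma stable_blocks (s : config n) : stable eps 0 s ->
  (exists alpha, forall i, blockA s i = alpha) /\ (exists beta, forall i, blockB s i = beta).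
Proof. by move/stable_ground; rewrite Ham_blocks; apply: ground_energy_blocks. Qed.
End GroundStates.

Section BarrierEstimates.
Variables (R : realFieldType) (n : nat) (eps : R).
Hypothesis n_ge2 : (2 <= n)%N.
Hypothesis eps_le1 : `|eps| <= 1.

Definition barrier : R :=
  if odd n then (n%:R ^+ 2 - 1) / 2 + `|eps| * (n.+1)%:R
  else n%:R ^+ 2 / 2 + `|eps| * n%:R.

(* The key numerical inequality, equivalent to (n - |y|) (n + |y| - 2|eps|) >= 0;
   this is where the hypotheses n >= 2 and |eps| <= 1 are used. *)
Lemma barrier_factor (y : R) : `|y| <= n%:R ->
  `|eps| * (n%:R - `|y|) <= (n%:R ^+ 2 - y ^+ 2) / 2.
Proof.
move=> y_le; have n2 : (2 : R) <= n%:R by rewrite (ler_nat R 2 n).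
have := normr_ge0 eps; have := normr_ge0 y; have := eps_le1 => e1 y0 e0.
have : 0 <= (n%:R - `|y|) * (n%:R + `|y| - 2 * `|eps|) by apply: mulr_ge0; lra.
rewrite -[y ^+ 2]real_normK ?num_real //; nra.
Qed.

(* Upper bound: a configuration with one constant block has energy at most
   ground_energy + barrier, by the parity of the other magnetization. *)
Lemma blockH_const_block_le (a b : 'I_n -> bool) (beta : bool) :
  (forall i, b i = beta) -> blockH eps a b <= ground_energy n eps + barrier.
Proof.
move=> bE; rewrite /blockH (overlap_const R a bE) (mag_const R bE).
rewrite exprMn [spin R beta ^+ 2]expr2 spinK mul1r.
set x := mag R a.
have cross : - (eps * (spin R beta * x)) <= `|eps| * `|x|.
  by apply: le_trans (ler_norm _) _; rewrite normrN !normrM norm_spin mul1r.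
have := eps_le1; have := normr_ge0 eps => e0 e1.
have := mag_parity R a; rewrite -/x -[x ^+ 2]real_normK ?num_real //.
rewrite /ground_energy /barrier -(natr1 n); case: (odd n) => [x1 | [x0 | x2]].
- have : 0 <= (`|x| - 1) * (`|x| + 1 - 2 * `|eps|) by apply: mulr_ge0; lra.
  nra.
- by move: cross; rewrite x0 normr0; lra.
- have : 0 <= `|x| * (`|x| - 2 * `|eps|) by apply: mulr_ge0; lra.
  nra.
Qed.

Lemma barrier_even (a b : 'I_n -> bool) : ~~ odd n -> mag R a = 0 ->
  ground_energy n eps + barrier <= blockH eps a b.
Proof.
move=> n_even a0; rewrite /ground_energy /barrier (negbTE n_even) /blockH a0.
have := overlap_le R a b; have := overlap_ge R a b; rewrite a0 sub0r add0r normrN => hge hle.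
have cross : eps * overlap R a b <= `|eps| * (n%:R - `|mag R b|).
  by apply: le_trans (ler_norm _) _; rewrite normrM ler_wpM2l // ler_norml; lra.
have := barrier_factor (norm_mag_le R b); lra.
Qed.

(* Lower bound, n odd: one of two configurations that differ by a single
   flip in a block, taking its magnetization from 1 to -1.  Their energies
   differ by 2 |eps|, and their mean is controlled by |c + c'| <= 2 (n - |y|). *)
Lemma barrier_odd (a a' b : 'I_n -> bool) :
  odd n -> flipped a a' -> mag R a = 1 -> mag R a' = -1 ->
  ground_energy n eps + barrier <= Num.max (blockH eps a b) (blockH eps a' b).
Proof.
move=> n_odd flip a1 a'1.
set c := overlap R a b; set c' := overlap R a' b; set y := mag R b.
have tri (u : R) : 2 * `|y| <= `|u - y| + `|u + y|.
  have -> : 2 * `|y| = `|(u + y) - (u - y)|.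
    by rewrite (_ : (u + y) - (u - y) = 2 * y) ?normrM ?normr_nat //; ring.
  by rewrite [X in _ <= X]addrC ler_normB.
have sum_le : `|c + c'| <= 2 * (n%:R - `|y|).
  have := overlap_le R a b; have := overlap_ge R a b.
  have := overlap_le R a' b; have := overlap_ge R a' b.
  have normE1 : `|-1 - y| = `|1 + y| by rewrite -normrN opprB opprK addrC.
  have normE2 : `|-1 + y| = `|1 - y| by rewrite -normrN opprD opprK.
  rewrite -/c -/c' -/y a1 a'1 normE1 normE2 ler_norml.
  by have := tri 1; lra.
have cross : eps * (c + c') <= `|eps| * (2 * (n%:R - `|y|)).
  by apply: le_trans (ler_norm _) _; rewrite normrM ler_wpM2l.
have max_ge (u v : R) : u + v + `|u - v| <= 2 * Num.max u v.
  by case: (lerP u v) => _; lra.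
have diff : `|blockH eps a b - blockH eps a' b| = 2 * `|eps|.
  rewrite /blockH a1 a'1 -/c -/c' -/y.
  rewrite (_ : _ - _ = - (eps * (c - c'))); last by ring.
  by rewrite normrN normrM (overlap_flipped R _ flip) mulrC.
have := max_ge (blockH eps a b) (blockH eps a' b); rewrite diff.
have := barrier_factor (norm_mag_le R b).
rewrite /ground_energy /barrier n_odd -(natr1 n) /blockH a1 a'1 -/c -/c' -/y; lra.
Qed.
End BarrierEstimates.

Lemma path_max_ge (R : realDomainType) (n : nat) (eps h : R) (eta x : config n) p :
  x \in eta :: p -> Ham eps h x <= path_max eps h eta p.
Proof.
elim: p => [|y p IH]; first by rewrite inE => /eqP ->.
rewrite /path_max /= le_max -/(path_max eps h eta p) !inE.
case/or3P => [x_eta | /eqP-> | xp].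
- by apply/orP; right; apply: IH; rewrite inE x_eta.
- by rewrite lexx.
- by apply/orP; right; apply: IH; rewrite inE xp orbT.
Qed.

Lemma path_max_le (R : realDomainType) (n : nat) (eps h : R) (eta : config n) p (T : R) :
  Ham eps h eta <= T -> all (fun x => Ham eps h x <= T) p -> path_max eps h eta p <= T.
Proof.
move=> eta_le; elim: p => [|y p IH] //= /andP[y_le p_le].
by rewrite /path_max /= ge_max y_le IH.
Qed.

Lemma neighb_sym (n : nat) : symmetric (@neighb n).
Proof. by move=> s t; rewrite /neighb; congr (_ == _); apply: eq_card => v; rewrite !inE eq_sym. Qed.

Lemma neighb_blocks (n : nat) (x y : config n) : neighb x y ->
  (blockB x =1 blockB y /\ flipped (blockA x) (blockA y)) \/
  (blockA x =1 blockA y /\ flipped (blockB x) (blockB y)).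
Proof.
move/cards1P=> [v /setP diff_v].
have diffE w : (x w != y w) = (w == v) by have := diff_v w; rewrite !inE.
have flip_v : y v = ~~ x v by have := diffE v; rewrite eqxx; case: (x v); case: (y v).
have same w : w != v -> y w = x w by rewrite -diffE => /negbNE/eqP.
clear diff_v diffE; case: (split_ordP v) => i ->{v} in flip_v same *; [left | right]; split.
- by move=> j; rewrite /blockB same // eq_rlshift.
- by exists i; split => // j ji; rewrite /blockA same // eq_lshift.
- by move=> j; rewrite /blockA same // eq_lrshift.
- by exists i; split => // j ji; rewrite /blockB same // eq_rshift.
Qed.

Section Interpolation.
Variables (n : nat) (s1 s2 : config n).

Definition interp (k : nat) : config n :=
  [ffun v : vertex n => if (val v < k)%N then s2 v else s1 v].

Lemma interp0 : interp 0 = s1.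
Proof. by apply/ffunP => v; rewrite ffunE. Qed.

Lemma interp_full : interp (n + n) = s2.
Proof. by apply/ffunP => v; rewrite ffunE ltn_ord. Qed.

Lemma interp_step (k : nat) : interp k.+1 = interp k \/ neighb (interp k) (interp k.+1).
Proof.
set D := [set v | interp k v != interp k.+1 v].
have D_at_k v : v \in D -> val v = k.
  by rewrite inE !ffunE ltnS; case: ltngtP; rewrite ?eqxx.
case: (set_0Vmem D) => [D0 | [v vD]].
  left; apply/ffunP => w; have : w \notin D by rewrite D0 in_set0.
  by rewrite inE negbK => /eqP.
right; apply/cards1P; exists v; apply/setP => w; rewrite in_set1.
apply/idP/eqP => [wD | -> //].
by apply: val_inj; rewrite (D_at_k w wD) (D_at_k v vD).
Qed.

Lemma interp_blockB (k : nat) : (k <= n)%N -> blockB (interp k) =1 blockB s1.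
Proof.
by move=> kn i; rewrite /blockB ffunE /= ltnNge (leq_trans kn (leq_addr _ _)).
Qed.

Lemma interp_blockA (k : nat) : (n <= k)%N -> blockA (interp k) =1 blockA s2.
Proof. by move=> nk i; rewrite /blockA ffunE /= (leq_trans (ltn_ord i) nk). Qed.
End Interpolation.

(* Lower bound for a path along which a block P goes from constant alpha to
   constant ~~ alpha, stated for an abstract choice of the flipping block P and
   the other block Q so that it applies to either block. *)
Lemma barrier_along_block (R : realFieldType) (n : nat) (eps : R)
    (P Q : config n -> 'I_n -> bool) (s1 s2 : config n) (p : seq (config n)) (alpha : bool) :
  (2 <= n)%N -> `|eps| <= 1 ->
  (forall s, Ham eps 0 s = blockH eps (P s) (Q s)) ->
  (forall x y, neighb x y -> (Q x =1 Q y /\ flipped (P x) (P y)) \/ P x =1 P y) ->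
  is_path s1 s2 p -> (forall i, P s1 i = alpha) -> (forall i, P s2 i = ~~ alpha) ->
  ground_energy n eps + barrier n eps <= path_max eps 0 s1 p.
Proof.
move=> n2 e1 HamE nbE /andP[s1p /eqP lastE] P1 P2.
have ups_eq x y : P x =1 P y -> ups (P x) = ups (P y).
  by move=> Pxy; apply: eq_bigr => i _; rewrite Pxy.
have ups_step x y : neighb x y -> (ups (P y) <= (ups (P x)).+1)%N.
  by case/nbE => [[_ /ups_flipped] // | /ups_eq ->].
have nE := odd_double_half n; set k := n./2 in nE.
have crossing : (k < ups (P s1))%N != (k < ups (P (last s1 p)))%N.
  by rewrite lastE (ups_const P1) (ups_const P2) -nE; case: (alpha); case: (odd n); lia.
have [x [y [xp yp nxy x_up y_up]]] :=
  path_crosses_level (f := fun s => ups (P s)) (@neighb_sym n) ups_step s1p crossing.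
have nR : (n%:R : R) = 2 * k%:R + (odd n)%:R.
  by rewrite -{1}nE natrD -muln2 natrM mulrC addrC.
case n_odd: (odd n) nR => /= nR.
  have [[Qxy flip] | Pxy] := nbE x y nxy; last by move: x_up; rewrite (ups_eq x y Pxy) y_up; lia.
  have := barrier_odd n2 e1 (Q x) n_odd flip.
  rewrite !mag_ups x_up y_up nR -natr1 => /(_ ltac:(ring) ltac:(ring)) /le_trans; apply.
  rewrite (@blockH_eq1 _ _ eps (P y) (P y) (Q x) (Q y) (frefl _) Qxy).
  by rewrite -!HamE ge_max !path_max_ge.
have := barrier_even n2 e1 (a := P y) (Q y) (negbT n_odd).
rewrite mag_ups y_up nR -HamE => /(_ ltac:(ring)) /le_trans; apply.
exact: path_max_ge.
Qed.

Lemma barrier_lower (R : realFieldType) (n : nat) (eps : R) (s1 s2 : config n)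
    (p : seq (config n)) :
  (2 <= n)%N -> `|eps| <= 1 -> stable eps 0 s1 -> stable eps 0 s2 -> s1 != s2 ->
  is_path s1 s2 p -> ground_energy n eps + barrier n eps <= path_max eps 0 s1 p.
Proof.
move=> n2 e1 st1 st2 s12 s12p.
have [[alpha1 A1] [beta1 B1]] := stable_blocks st1.
have [[alpha2 A2] [beta2 B2]] := stable_blocks st2.
have [dA | dB] : alpha1 != alpha2 \/ beta1 != beta2.
  case: (eqVneq alpha1 alpha2) => [eA | ]; last by left.
  case: (eqVneq beta1 beta2) => [eB | ]; last by right.
  case/negP: s12; apply/eqP/ffunP => v; case: (split_ordP v) => i ->.
    by have := A1 i; have := A2 i; rewrite /blockA eA => -> ->.
  by have := B1 i; have := B2 i; rewrite /blockB eB => -> ->.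
- apply: (barrier_along_block (P := @blockA n) (Q := @blockB n) (s2 := s2) (alpha := alpha1)) => //.
  + by move=> s; rewrite Ham_blocks.
  + by move=> x y /neighb_blocks[[]|[]]; [left | right].
  + by move=> i; rewrite A2; case: (alpha1) (alpha2) dA => -[].
- apply: (barrier_along_block (P := @blockB n) (Q := @blockA n) (s2 := s2) (alpha := beta1)) => //.
  + by move=> s; rewrite Ham_blocks blockHC.
  + by move=> x y /neighb_blocks[[]|[]]; [right | left].
  + by move=> i; rewrite B2; case: (beta1) (beta2) dB => -[].
Qed.

Lemma barrier_upper (R : realFieldType) (n : nat) (eps : R) (s1 s2 : config n) :
  `|eps| <= 1 -> stable eps 0 s1 -> stable eps 0 s2 ->
  exists p, is_path s1 s2 p /\ path_max eps 0 s1 p <= ground_energy n eps + barrier n eps.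
Proof.
move=> e1 st1 st2.
have [_ [beta1 B1]] := stable_blocks st1; have [[alpha2 A2] _] := stable_blocks st2.
pose low (s : config n) := Ham eps 0 s <= ground_energy n eps + barrier n eps.
have interp_low k : (k <= n + n)%N -> low (interp s1 s2 k).
  move=> _; rewrite /low Ham_blocks; case: (leqP k n) => kn.
    by apply: (blockH_const_block_le e1 _ (beta := beta1)) => i; rewrite interp_blockB.
  rewrite blockHC; apply: (blockH_const_block_le e1 _ (beta := alpha2)) => i.
  by rewrite interp_blockA // ltnW.
have [p [s1p lastp lowp]] := path_of_steps (fun k _ => interp_step s1 s2 k) interp_low.
rewrite interp0 interp_full in s1p lastp; exists p; split.
  by rewrite /is_path s1p lastp eqxx.
by apply: path_max_le => //; have := interp_low 0%N (leq0n _); rewrite interp0.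
Qed.

Theorem corollary4p6 (R : realFieldType) (n : nat) (eps : R) :
  (2 <= n)%N -> -1 <= eps <= 1 ->
  forall s1 s2 : config n,
    stable eps 0 s1 -> stable eps 0 s2 -> s1 != s2 ->
    is_Phi eps 0 s1 s2
      (Ham eps 0 s1 +
       (if odd n
        then ((n%:R ^+ 2 - 1) / 2 + `|eps| * (n.+1)%:R)
        else (n%:R ^+ 2 / 2 + `|eps| * n%:R))).
Proof.
move=> n2 /andP[eps_lo eps_hi] s1 s2 st1 st2 s12.
have e1 : `|eps| <= 1 by rewrite ler_norml eps_lo eps_hi.
rewrite (stable_ground st1) -/(barrier n eps).
have [p [s1p p_le]] := barrier_upper e1 st1 st2.
split; last by move=> q; apply: barrier_lower.
exists p; split => //.
by apply/eqP; rewrite eq_le p_le (barrier_lower n2 e1 st1 st2 s12 s1p).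
Qed.
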